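(* For every seller $j\in[m]$, the probability that the mechanism $\mathbb{M}_{\text{add}}$ makes seller $j$ an offer (for her bundle $S_j$ at payment $p(S_j)$) that she accepts is exactly $1/2$.
   Context: Two-sided market: buyers $[n]$, sellers $[m]$, items $[k]$; seller $j$ owns $I_j$ ($I_j$ disjoint, covering $[k]$). Buyer valuations $v_i$ are monotone normalized XOS functions on $2^{[k]}$ drawn independently from public distributions $G_i$; seller $j$'s valuation $w_j$ is additive over subsets of $I_j$, drawn independently from a public distribution $F_j$. For XOS $v$ and $T\subseteq[k]$, $a(v,T,\cdot)$ is a fixed additive function with $a(v,T,T)=v(T)$, $a(v,T,S)\le v(S)$. $\mathbb{A}$ maps each buyer profile $\mathbf v$ to an allocation $X^{\mathbb A}(\mathbf v)$ of disjoint bundles to buyers. $\mathrm{SW}^B_\ell(\mathbf v)=a(v_i,X^{\mathbb A}_i(\mathbf v),\{\ell\})$ if $\ell\in X^{\mathbb A}_i(\mathbf v)$, else $0$; $\mathrm{SW}^S_\ell(\mathbf w)=w_j(\{\ell\})$ for $\ell\in I_j$. $L_j=\{\ell\in I_j:\mathbb{E}[\mathrm{SW}^B_\ell]\ge4\mathbb{E}[\mathrm{SW}^S_\ell]\}$, $L=\bigcup_jL_j$, $p_\ell=\frac12\mathbb{E}[\mathrm{SW}^B_\ell(\mathbf v)]$ for $\ell\in L$. Mechanism $\mathbb{M}_{\text{add}}$: $\Lambda_1=L$; buyers $i=1,\dots,n$ in turn request a bundle $B_i\subseteq\Lambda_i$ maximizing their expected utility at prices $p_\ell$, and $\Lambda_{i+1}=\Lambda_i\setminus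 B_i$. Let $B=\bigcup_iB_i$. For each seller $j$: $S_j=B\cap L_j$, $p(S_j)=\sum_{\ell\in S_j}p_\ell$, $q_j=1/(2\Pr[w_j(S_j)\le p(S_j)])$; with probability $q_j$ the mechanism offers $j$ payment $p(S_j)$ for $S_j$, and she accepts iff $w_j(S_j)\le p(S_j)$; on acceptance items of $S_j$ go to their requesting buyers at prices $p_\ell$. *)

From HB Require Import structures.
From mathcomp Require Import all_boot all_order all_algebra.
From mathcomp Require Import all_classical all_reals all_analysis.

Set Implicit Arguments.
Unset Strict Implicit.
Unset Printing Implicit Defensive.

Import Order.TTheory GRing.Theory Num.Theory.

Local Open Scope ring_scope.

Section Valuations.
Context (R : realType) (k : nat).
Local Notation item := 'I_k.

Definition valuation := {set item} -> R.

Definition monotone_val (v : valuation) : Prop :=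
  forall S T : {set item}, S \subset T -> v S <= v T.

Definition normalized_val (v : valuation) : Prop := v finset.set0 = 0.

Definition additive_fun (f : item -> R) : valuation :=
  fun S => \sum_(l in S) f l.

Definition XOS_val (v : valuation) : Prop :=
  exists (N : nat) (cl : 'I_N -> item -> R),
    (forall c l, 0 <= cl c l) /\
    (forall S, v S = \big[Num.max/0]_(c < N) additive_fun (cl c) S).

Definition supporting_clauses (a : valuation -> {set item} -> item -> R)
  : Prop :=
  forall v, XOS_val v -> forall T : {set item},
    (forall l, 0 <= a v T l) /\
    additive_fun (a v T) T = v T /\
    (forall S, additive_fun (a v T) S <= v S).

End Valuations.

Section Market.
Context (R : realType) (n m k : nat).
Local Notation item := 'I_k.
Local Notation profile := ('I_n -> valuation R k).

Context (XA : profile -> 'I_n -> {set item})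
        (a : valuation R k -> {set item} -> item -> R).

(* SW^B_l(v) = a(v_i, X_i(v), {l}) if l \in X_i(v), 0 otherwise
   (bundles are disjoint, so at most one summand is nonzero) *)
Definition SWB (prof : profile) (l : item) : R :=
  \sum_(i < n) (if l \in XA prof i then a (prof i) (XA prof i) l else 0).

Context {db : measure_display} {Tb : measurableType db}
        (G : probability Tb R) (vv : Tb -> profile).
Context {dw : measure_display} {Tw : measurableType dw}
        (F : 'I_m -> probability Tw R) (wv : Tw -> item -> R)
        (owner : item -> 'I_m).

Definition ESWB (l : item) : \bar R := (\int[G]_t (SWB (vv t) l)%:E)%E.
Definition ESWS (l : item) : \bar R := (\int[F (owner l)]_s (wv s l)%:E)%E.

Definition Lset : {set item} := [set l | (4%:E * ESWS l <= ESWB l)%E].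

Definition price (l : item) : R := fine (ESWB l) / 2.

Definition psum (S : {set item}) : R := \sum_(l in S) price l.

(* buyers' request rule: req i v_i Lambda is the bundle buyer i (with
   valuation v_i) requests when Lambda is still available *)
Context (req : 'I_n -> valuation R k -> {set item} -> {set item}).

(* Lambda_{i+1} (0-indexed: lam t i is the set available to buyer i) *)
Fixpoint lam (t : Tb) (i : nat) : {set item} :=
  match i with
  | 0 => Lset
  | i'.+1 =>
      let Lam := lam t i' in
      Lam :\: oapp (fun ii : 'I_n => req ii (vv t ii) Lam) finset.set0 (insub i')
  end.

Definition Breq (t : Tb) (i : 'I_n) : {set item} := req i (vv t i) (lam t i).

Definition Bset (t : Tb) : {set item} := \bigcup_(i < n) Breq t i.

Definition Sj (j : 'I_m) (t : Tb) : {set item} :=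
  [set l in Bset t | (owner l == j) && (l \in Lset)].

Definition wS (s : Tw) (S : {set item}) : R := additive_fun (wv s) S.

Definition accept_prob (j : 'I_m) (S : {set item}) : \bar R :=
  F j [set s | wS s S <= psum S]%classic.

Definition qj (j : 'I_m) (S : {set item}) : R :=
  (2 * fine (accept_prob j S))^-1.

(* Outcome space for the event concerning seller j:
   ((buyer profile, seller valuation), coin u ~ Unif[0,1]).
   The offer is made iff u < q_j (probability q_j), and seller j accepts
   iff w_j(S_j) <= p(S_j). *)
Definition offer_accepted_event (j : 'I_m) : set ((Tb * Tw) * R) :=
  [set x | x.2 < qj j (Sj j x.1.1) /\
           wS x.1.2 (Sj j x.1.1) <= psum (Sj j x.1.1)]%classic.

End Market.

From HB Require Import structures.
From mathcomp Require Import all_boot all_order all_algebra.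
From mathcomp Require Import all_classical all_reals all_analysis.
From mathcomp Require Import ring lra measurable_realfun.

Import Order.TTheory GRing.Theory Num.Theory.
Local Open Scope ring_scope.

(* Condition on the bundle S = S_j(v) offered to seller j: it is a function
   of the buyers' profile alone, so given S the seller's valuation and the
   coin are still independent of it.  Every item of S lies in L_j, hence
   E[w_j(S)] <= p(S)/2 and, by Markov's inequality,
   Pr[w_j(S) <= p(S)] >= 1/2.  So q_j(S) <= 1, and the offer is made and
   accepted with probability Pr[w_j(S) <= p(S)] * q_j(S) = 1/2 for every
   value of S; averaging over S gives 1/2. *)

Section MeasurableFibers.
Local Open Scope classical_set_scope.
Context {d : measure_display} {T : measurableType d}.

Definition measurable_fibers {U : Type} (f : T -> U) :=
  forall u, measurable [set t | f t = u].

Lemma measurable_fibers_cst (U : Type) (u0 : U) :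
  measurable_fibers (fun _ => u0).
Proof.
move=> u; have [<-|neq] := pselect (u0 = u).
  by rewrite [X in measurable X](_ : _ = setT) //; apply/seteqP.
rewrite [X in measurable X](_ : _ = set0) //.
by apply/seteqP; split=> t //=.
Qed.

Lemma measurable_fibers_bind {U : finType} {V : Type} {f : T -> U}
    (g : U -> T -> V) :
  measurable_fibers f -> (forall u, measurable_fibers (g u)) ->
  measurable_fibers (fun t => g (f t) t).
Proof.
move=> mf mg v.
rewrite (_ : [set t | g (f t) t = v] =
    \bigcup_(u in [set: U]) ([set t | f t = u] `&` [set t | g u t = v])).
  apply: fin_bigcup_measurable; first exact: finite_finset.
  by move=> u _; apply: measurableI; [exact: mf | exact: mg].
by apply/seteqP; split=> t /=; [exists (f t) | case=> u _ [<-]].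
Qed.

Lemma measurable_fibers_comp {U : finType} {V : Type} {f : T -> U}
    (g : U -> V) :
  measurable_fibers f -> measurable_fibers (fun t => g (f t)).
Proof.
move=> mf; apply: (measurable_fibers_bind (fun u _ => g u) mf) => u.
exact: measurable_fibers_cst.
Qed.

Lemma measurable_fibers_ffun {I : finType} {U : Type} {f : I -> T -> U} :
  (forall i, measurable_fibers (f i)) ->
  measurable_fibers (fun t => [ffun i => f i t]).
Proof.
move=> mf g.
rewrite (_ : [set t | [ffun i => f i t] = g] =
    \bigcap_(i in [set: I]) [set t | f i t = g i]).
  apply: fin_bigcap_measurable; first exact: finite_finset.
  by move=> i _; exact: mf.
apply/seteqP; split=> t /=; first by move=> <- i _; rewrite ffunE.
by move=> fg; apply/ffunP => i; rewrite ffunE; exact: fg.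
Qed.

Lemma sum_probability_fibers (R : realType) (P : probability T R)
    (U : finType) (f : T -> U) :
  measurable_fibers f -> (\sum_(u \in [set: U]) P [set t | f t = u])%E = 1%E.
Proof.
move=> mf; rewrite -measure_fin_bigcup //; last 2 first.
- exact: finite_finset.
- by move=> u u' _ _ [t [<- <-]].
rewrite -(probability_setT P); congr (P _).
by apply/seteqP; split=> t // _; exists (f t).
Qed.

End MeasurableFibers.

Lemma uniform_prob_lt (R : realType) (q : R) : 0 <= q <= 1 ->
  uniform_prob (@ltr01 R) [set u | u < q]%classic = q%:E.
Proof.
move=> /andP[q0 q1].
rewrite /uniform_prob integral_uniform_pdf.
rewrite (_ : ([set u | u < q] `&` `[0, 1])%classic = `[0, q[%classic);
    last first.
  apply/seteqP; split=> x /=; rewrite !in_itv /=; first by case=> xq /andP[->].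
  by move=> /andP[-> xq]; split=> //; rewrite (le_trans (ltW xq) q1).
rewrite (eq_integral (fun=> 1%:E)); last first.
  move=> x; rewrite inE /= in_itv /= => /andP[x0 xq].
  by rewrite /uniform_pdf x0 (le_trans (ltW xq) q1) subr0 invr1.
rewrite integral_cst //= mul1e lebesgue_measure_itv /= lte_fin.
have [->|q_neq0] := eqVneq q 0; first by rewrite ltxx.
by rewrite lt_def q_neq0 q0 oppr0 adde0.
Qed.

Lemma mul_uniform_coin_half (R : realType) (p : R) : 2^-1 <= p ->
  (p%:E * uniform_prob (@ltr01 R) [set u | (u < (2 * p)^-1)%R]%classic
    = (2^-1)%:E)%E.
Proof.
move=> p_ge; have p_gt0 : 0 < p by lra.
rewrite uniform_prob_lt -?EFinM; last first.
  by rewrite invr_ge0 invf_le1 ?mulr_gt0 //; lra.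
by congr EFin; field; rewrite gt_eqF.
Qed.

Lemma markov_half {d : measure_display} {T : measurableType d} (R : realType)
    (P : probability T R) (f : T -> R) (c : R) :
  measurable_fun [set: T] f -> (forall x, 0 <= f x) ->
  (\int[P]_x (f x)%:E <= (c / 2)%:E)%E ->
  ((2^-1)%:E <= P [set x | (f x <= c)%R]%classic)%E.
Proof.
move=> mf f_ge0 int_f.
have mfE : measurable_fun [set: T] (fun x => (f x)%:E).
  exact/measurable_EFinP.
have int_f_ge0 : (0 <= \int[P]_x (f x)%:E)%E.
  by apply: integral_ge0 => x _; rewrite lee_fin.
have int_abs : (\int[P]_x `|(f x)%:E| = \int[P]_x (f x)%:E)%E.
  by apply: eq_integral => x _; rewrite gee0_abs // lee_fin.
have c_ge0 : 0 <= c by move: (le_trans int_f_ge0 int_f); rewrite lee_fin; lra.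
pose Bc := [set x | c < f x]%classic.
have mBc : measurable Bc.
  have := mf measurableT _ (measurable_itv `]c, +oo[); rewrite setTI.
  by congr measurable; apply/seteqP; split=> x /=; rewrite in_itv /= andbT.
pose r := fine (P Bc).
have PBcE : P Bc = r%:E by rewrite fineK // fin_num_measure.
rewrite [X in P X](_ : _ = ~` Bc)%classic; last first.
  by apply/seteqP; split=> x /=; rewrite /Bc /= leNgt => /negP.
rewrite probability_setC // PBcE -EFinB lee_fin.
suff : r <= 2^-1 by lra.
move: c_ge0; rewrite le_eqVlt => /predU1P[c0|c_gt0].
  have int_abs0 : (\int[P]_x `|(f x)%:E| = 0)%E.
    apply/eqP; rewrite int_abs eq_le int_f_ge0 andbT.
    by rewrite (le_trans int_f) // -c0 mul0r.
  have [N [mN PN0 fN]] := (ae_eq_integral_abs P measurableT mfE).1 int_abs0.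
  have : (P Bc <= P N)%E.
    apply: le_measure; rewrite ?inE // => x; rewrite /Bc /= -c0 => fx_gt0.
    by apply: fN => /(_ I) /= [fx0]; rewrite fx0 ltxx in fx_gt0.
  by rewrite PBcE PN0 lee_fin => /le_trans; apply; rewrite invr_ge0.
have markov := le_integral_abse P measurableT mfE c_gt0.
rewrite int_abs in markov.
have : (c%:E * P Bc <= (c / 2)%:E)%E.
  apply: le_trans (le_trans markov int_f).
  apply: lee_wpmul2l; first by rewrite lee_fin ltW.
  apply: le_measure; rewrite ?inE //.
    by apply: emeasurable_fun_c_infty => //; exact: measurableT_comp.
  by move=> x; rewrite /Bc /= lee_fin ger0_norm // => /ltW.
rewrite PBcE -EFinM lee_fin; nra.
Qed.

Section FiberwiseProduct.
Local Open Scope classical_set_scope.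
Local Open Scope ereal_scope.

Lemma product_measure_fiberwise_cst {d1 d2 d3 : measure_display}
    {T1 : measurableType d1} {T2 : measurableType d2} {T3 : measurableType d3}
    (R : realType) (P : probability T1 R)
    (Q2 : {sigma_finite_measure set T2 -> \bar R})
    (Q3 : {sigma_finite_measure set T3 -> \bar R})
    (U : finType) (f : T1 -> U) (B : U -> set T2) (C : U -> set T3)
    (c : \bar R) :
  measurable_fibers f -> (forall u, measurable (B u)) ->
  (forall u, measurable (C u)) ->
  (forall t, Q2 (B (f t)) * Q3 (C (f t)) = c) ->
  ((P \x Q2) \x Q3) [set x | B (f x.1.1) x.1.2 /\ C (f x.1.1) x.2] = c.
Proof.
move=> mf mB mC BC_cst.
pose E u := ([set t | f t = u] `*` B u) `*` C u.
have mE u : measurable (E u).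
  apply: measurableX; last exact: mC.
  by apply: measurableX; [exact: mf | exact: mB].
rewrite (_ : [set x | _] = \bigcup_(u in [set: U]) E u); last first.
  apply/seteqP; split=> -[[t s] x] /=; first by case=> Bs Cx; exists (f t).
  by case=> u _ [[/= <-]].
rewrite measure_fin_bigcup //; last 2 first.
- exact: finite_finset.
- by move=> u u' _ _ [[[t s] x] [[[/= <- _] _] [[/= <- _] _]]].
transitivity (\sum_(u \in [set: U]) P [set t | f t = u] * c).
  apply: eq_fsbigr => u _.
  transitivity ((P \x Q2) ([set t | f t = u] `*` B u) * Q3 (C u)).
    apply: product_measure1E => //.
    by apply: measurableX; [exact: mf | exact: mB].
  rewrite product_measure1E ?(mB u) // -muleA.
  have [[t <-]|no_fiber] := pselect (exists t, f t = u).
    by rewrite BC_cst.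
  have -> : [set t | f t = u] = set0.
    by apply/seteqP; split=> t // ftu; apply: no_fiber; exists t.
  by rewrite !measure0 !mul0e.
by rewrite -ge0_mule_fsuml ?sum_probability_fibers ?mul1e.
Qed.

End FiberwiseProduct.

Section Market.
Context (R : realType) (n m k : nat)
  (XA : ('I_n -> valuation R k) -> 'I_n -> {set 'I_k})
  (a : valuation R k -> {set 'I_k} -> 'I_k -> R)
  (db : measure_display) (Tb : measurableType db)
  (G : probability Tb R) (vv : Tb -> 'I_n -> valuation R k)
  (dw : measure_display) (Tw : measurableType dw)
  (F : 'I_m -> probability Tw R) (wv : Tw -> 'I_k -> R)
  (owner : 'I_k -> 'I_m)
  (req : 'I_n -> valuation R k -> {set 'I_k} -> {set 'I_k}).

Local Notation L := (Lset XA a G vv F wv owner).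
Local Notation price := (price XA a G vv).
Local Notation psum := (psum XA a G vv).
Local Notation wS := (wS wv).
Local Notation Sj := (Sj XA a G vv F wv owner req).

Hypothesis req_fibers :
  forall i Lam S, measurable [set t | req i (vv t i) Lam = S]%classic.
Hypothesis wv_ge0 : forall s l, 0 <= wv s l.
Hypothesis measurable_wv :
  forall l, measurable_fun [set: Tw] (fun s => wv s l).
Hypothesis SWB_integrable :
  forall l, G.-integrable [set: Tb] (fun t => (SWB XA a (vv t) l)%:E).
Hypothesis wv_integrable :
  forall l, (F (owner l)).-integrable [set: Tw] (fun s => (wv s l)%:E).

Lemma measurable_fibers_lam i :
  measurable_fibers (fun t => lam XA a G vv F wv owner req t i).
Proof.
elim: i => [|i IH] /=; first exact: measurable_fibers_cst.
apply: (measurable_fibers_bind (fun Lam t => Lam :\: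
  oapp (fun i' : 'I_n => req i' (vv t i') Lam) finset.set0 (insub i)) IH).
move=> Lam; case: insubP => [i' _ _ | _] /=; last exact: measurable_fibers_cst.
exact: measurable_fibers_comp (req_fibers i' Lam).
Qed.

Lemma measurable_fibers_Breq i :
  measurable_fibers (fun t => Breq XA a G vv F wv owner req t i).
Proof.
exact: (measurable_fibers_bind (fun Lam t => req i (vv t i) Lam))
  (measurable_fibers_lam i) (req_fibers i).
Qed.

Lemma measurable_fibers_Sj j : measurable_fibers (Sj j).
Proof.
have := measurable_fibers_comp
  (fun B : {ffun 'I_n -> {set 'I_k}} =>
     [set l in \bigcup_(i < n) B i | (owner l == j) && (l \in L)])
  (measurable_fibers_ffun measurable_fibers_Breq).
congr measurable_fibers; apply/funext => t; apply/setP => l.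
by rewrite !inE; under eq_bigr => i _ do rewrite ffunE.
Qed.

(* Integrability matters: [price] goes through [fine], which would send an
   infinite E[SW^B_l] to 0. *)
Lemma ESWS_le_half_price l :
  l \in L -> (ESWS F wv owner l <= (price l / 2)%:E)%E.
Proof.
have ESWB_fin := integrable_fin_num measurableT (SWB_integrable l).
have ESWS_fin := integrable_fin_num measurableT (wv_integrable l).
rewrite inE /price /ESWB /ESWS -(fineK ESWB_fin) -(fineK ESWS_fin) -EFinM.
by rewrite !lee_fin; lra.
Qed.

Lemma wS_ge0 s S : 0 <= wS s S.
Proof. exact: sumr_ge0. Qed.

Lemma measurable_wS S : measurable_fun [set: Tw] (fun s => wS s S).
Proof.
rewrite /wS /additive_fun; under eq_fun => s do rewrite -big_filter.
by apply: measurable_sum => l; exact: measurable_wv.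
Qed.

Lemma measurable_wS_le S c : measurable [set s | wS s S <= c]%classic.
Proof.
have := measurable_wS S measurableT _ (measurable_itv `]-oo, c]).
rewrite setTI.
by congr measurable; apply/seteqP; split=> s /=; rewrite in_itv.
Qed.

Lemma integral_wS_le_half_psum j (S : {set 'I_k}) :
  {in S, forall l, owner l = j /\ l \in L} ->
  (\int[F j]_s (wS s S)%:E <= (psum S / 2)%:E)%E.
Proof.
move=> S_owned.
under eq_integral => s _ do rewrite /wS /additive_fun -sumEFin big_mkcond /=.
rewrite ge0_integral_sum //; last 2 first.
- move=> l; case: (l \in S) => //.
  by apply/measurable_EFinP; exact: measurable_wv.
- by move=> l s _; case: (l \in S) => //; rewrite lee_fin.
rewrite /psum mulr_suml -sumEFin [leRHS]big_mkcond /=.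
apply: lee_sum => l _; case: ifPn => lS; last by rewrite integral0.
have [<- lL] := S_owned l lS.
exact: ESWS_le_half_price.
Qed.

Lemma accept_prob_Sj_ge_half j t :
  ((2^-1)%:E <= accept_prob XA a G vv F wv j (Sj j t))%E.
Proof.
apply: markov_half; [exact: measurable_wS | move=> s; exact: wS_ge0 |].
apply: (integral_wS_le_half_psum j) => l.
by rewrite inE => /andP[_ /andP[/eqP]].
Qed.

Lemma offer_accepted_half j :
  ((G \x F j) \x uniform_prob (@ltr01 R))%E
    (offer_accepted_event XA a G vv F wv owner req j) = (2^-1)%:E.
Proof.
pose accepts S := [set s | wS s S <= psum S]%classic.
pose offered S := [set u : R | u < qj XA a G vv F wv j S]%classic.
rewrite (_ : offer_accepted_event _ _ _ _ _ _ _ _ j =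
    [set x | accepts (Sj j x.1.1) x.1.2 /\ offered (Sj j x.1.1) x.2]%classic).
  apply: product_measure_fiberwise_cst.
  - exact: measurable_fibers_Sj.
  - by move=> S; exact: measurable_wS_le.
  - move=> S; rewrite (_ : offered S = `]-oo, qj XA a G vv F wv j S[%classic).
      exact: measurable_itv.
    by apply/seteqP; split=> u /=; rewrite in_itv.
  move=> t; set S := Sj j t.
  pose p := fine (F j (accepts S)).
  have pE : F j (accepts S) = p%:E.
    by rewrite fineK // fin_num_measure //; exact: measurable_wS_le.
  have half_le_p : 2^-1 <= p.
    by rewrite -lee_fin -pE; exact: accept_prob_Sj_ge_half.
  have -> : offered S = [set u | u < (2 * p)^-1]%classic.
    by rewrite /offered /qj /accept_prob -/(accepts S) pE.
  by rewrite -(mul_uniform_coin_half _ _ half_le_p) -pE.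
by apply/seteqP; split=> x [].
Qed.

End Market.

Theorem proposition5 (R : realType) (n m k : nat)
  (* allocation algorithm A and supporting clauses a(v,T,.) *)
  (XA : ('I_n -> valuation R k) -> 'I_n -> {set 'I_k})
  (a : valuation R k -> {set 'I_k} -> 'I_k -> R)
  (* buyers: joint distribution of the valuation profile *)
  (db : measure_display) (Tb : measurableType db)
  (G : probability Tb R) (vv : Tb -> 'I_n -> valuation R k)
  (* sellers: F_j, additive valuations given by per-item values *)
  (dw : measure_display) (Tw : measurableType dw)
  (F : 'I_m -> probability Tw R) (wv : Tw -> 'I_k -> R)
  (owner : 'I_k -> 'I_m)
  (* buyers' request rule *)
  (req : 'I_n -> valuation R k -> {set 'I_k} -> {set 'I_k}) :
  (* buyer valuations are monotone, normalized XOS *)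
  (forall t i, monotone_val (vv t i) /\ normalized_val (vv t i) /\
               XOS_val (vv t i)) ->
  supporting_clauses a ->
  (* A allocates disjoint bundles *)
  (forall prof (i i' : 'I_n), i != i' -> [disjoint XA prof i & XA prof i']) ->
  (* seller valuations are (monotone, normalized) additive *)
  (forall s l, 0 <= wv s l) ->
  (forall l, measurable_fun [set: Tw] (fun s => wv s l)) ->
  (* finite expectations *)
  (forall l, G.-integrable [set: Tb]
               (fun t => (SWB XA a (vv t) l)%:E)) ->
  (forall l, (F (owner l)).-integrable [set: Tw] (fun s => (wv s l)%:E)) ->
  (* each buyer requests an available bundle, measurably in her type *)
  (forall i v Lam, req i v Lam \subset Lam) ->
  (forall i Lam S, measurable [set t | req i (vv t i) Lam = S]%classic) ->
  forall j : 'I_m,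
    (((G \x F j) \x uniform_prob (@ltr01 R))
       (offer_accepted_event XA a G vv F wv owner req j) = (2^-1 : R)%:E)%E.
Proof.
move=> _ _ _ wv_ge0 measurable_wv SWB_integrable wv_integrable _ req_fibers j.
exact: offer_accepted_half.
Qed.
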